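(* Let $F$ be a periodic fabric of order greater than $4$ whose side-preserving symmetry group $H_1$ is generated by side-preserving glide-reflections and is transitive on the set of all strands (warps and wefts together). Suppose $F$ is perfectly coloured by thin striping (for one of the two possible choices of thin striping). Then the resulting pattern, regarded as a design, is the design of an isonemal prefabric that falls apart.
   Context: The plane is divided into unit square cells by a square grid. A prefabric (here two-layered) consists of vertical strands (warps, the columns of cells) and horizontal strands (wefts, the rows of cells), together with a specification, in every cell, of which of the two strands crossing there is uppermost when viewed from a fixed side (the obverse). Its design is the dark/pale colouring of the cells in which a cell is dark if the warp is uppermost there and pale if the weft is uppermost (normal colouring); conversely any dark/pale colouring of the cells, regarded as a design, determines a prefabric in this way. A prefabric is periodic if it is invariant under two linearly independent translations; its order is the length of the period of the (one-dimensional, periodic) up/down sequence along a strand. A symmetry of a prefabric is an isometry of the plane mapping the grid to itself and the prefabric to itself, possibly composed with side reversal $\tau$ (reflection in the plane of the prefabric, which interchanges which strand is uppermost in every cell); those not involving $\tau$ are side-preserving and those involving $\tau$ are side-reversing. The symmetry group is $G_1$ and its side-preserving subgroup is $H_1$. A prefabric is isonemal if $G_1$ is transitive on the set of all strands. A fabric is a prefabric that does not fall apart; a prefabric falls apart if there is a nonempty proper subset $S$ of its strands such that at every cell where a strand of $S$ crosses a strand not in $S$, the strand of $S$ is uppermost (so the strands of $S$ can be lifted off the rest). Thin striping colours the strands (not the cells) with two colours: warps alternately dark and pale, and wefts alternately dark and pale; there are two essentially different ways to do this relative to the fabric. The resulting pattern colours each cell with the colour of the strand uppermost in that cell. The colouring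 is perfect if every symmetry in $G_1$ permutes the strand colours consistently, i.e. maps all dark strands to dark strands and all pale strands to pale strands, or all dark strands to pale strands and all pale strands to dark strands. *)

(* Cells of the grid are indexed by Z x Z (cell (i,j) lies on
   warp i, i.e. column i, and on weft j, i.e. row j). *)
From mathcomp Require Import all_boot all_order all_algebra.
Set Implicit Arguments. Unset Strict Implicit. Unset Printing Implicit Defensive.
Import Order.TTheory GRing.Theory Num.Theory.
Local Open Scope ring_scope.

Definition cell := (int * int)%type.

(* A design / prefabric: true = dark = warp uppermost (normal colouring). *)
Definition design := cell -> bool.

(* An isometry of the plane mapping the grid to itself, described by its
   (faithful) action on cells: p |-> A p + c with A a signed permutation
   matrix (optionally swap the coordinates, then negate some of them) and
   c an integer vector.  Every such map comes from a unique grid isometry. *)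
Record iso := Iso { iswap : bool; inegx : bool; inegy : bool; ishift : int * int }.

Definition sgn (b : bool) (x : int) : int := if b then - x else x.

Definition cellmap (g : iso) (p : cell) : cell :=
  let q := if iswap g then (p.2, p.1) else p in
  (sgn (inegx g) q.1 + (ishift g).1, sgn (inegy g) q.2 + (ishift g).2).

(* orientation-reversing: determinant of A is -1 *)
Definition orient_rev (g : iso) : bool := iswap g (+) inegx g (+) inegy g.

(* glide-reflection: orientation-reversing isometry that is not a reflection
   (an orientation-reversing isometry of the plane is a reflection iff it is an
   involution). *)
Definition is_glide (g : iso) : Prop :=
  orient_rev g /\ ~ (forall p, cellmap g (cellmap g p) = p).

(* (g, tau) is a symmetry of the prefabric F; tau = true means composed with
   side reversal.  If g interchanges warps and wefts (iswap) or tau holds, the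
   design colour is complemented. *)
Definition is_symmetry (F : design) (g : iso) (tau : bool) : Prop :=
  forall p, F (cellmap g p) = F p (+) iswap g (+) tau.

Definition H1_generated_by_glides (F : design) : Prop :=
  forall g, is_symmetry F g false ->
    exists l : seq iso,
      (foldr (fun h P => (is_symmetry F h false /\ is_glide h) /\ P) True l) /\
      (forall p, cellmap g p = foldr (fun h q => cellmap h q) p l).

(* strands: (false, x) = warp x (column x), (true, y) = weft y (row y) *)
Definition strand := (bool * int)%type.

Definition on_strand (s : strand) (p : cell) : bool :=
  if s.1 then p.2 == s.2 else p.1 == s.2.

Definition maps_strand (g : iso) (s t : strand) : Prop :=
  forall p, on_strand s p -> on_strand t (cellmap g p).

Definition isonemal (F : design) : Prop :=
  forall s t : strand, exists g tau, is_symmetry F g tau /\ maps_strand g s t.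

Definition H1_transitive (F : design) : Prop :=
  forall s t : strand, exists g, is_symmetry F g false /\ maps_strand g s t.

Definition periodic (F : design) : Prop :=
  exists u v : int * int, u.1 * v.2 - u.2 * v.1 != 0 /\
    (forall p : cell, F (p.1 + u.1, p.2 + u.2) = F p) /\
    (forall p : cell, F (p.1 + v.1, p.2 + v.2) = F p).

(* up/down sequence along a strand: true = the strand is uppermost *)
Definition updown (F : design) (s : strand) (k : int) : bool :=
  if s.1 then ~~ F (k, s.2) else F (s.2, k).

Definition is_period (F : design) (s : strand) (n : nat) : Prop :=
  (0 < n)%N /\ forall k, updown F s (k + n%:Z) = updown F s k.

Definition least_period (F : design) (s : strand) (n : nat) : Prop :=
  is_period F s n /\ forall m, is_period F s m -> (n <= m)%N.

Definition order_gt (F : design) (m : nat) : Prop :=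
  forall s n, least_period F s n -> (m < n)%N.

Definition falls_apart (F : design) : Prop :=
  exists S : strand -> bool, (exists s, S s) /\ (exists t, ~~ S t) /\
    forall i j : int,
      (S (false, i) && ~~ S (true, j) -> F (i, j)) /\
      (S (true, j) && ~~ S (false, i) -> ~~ F (i, j)).

Definition fabric (F : design) : Prop := ~ falls_apart F.

(* thin striping, with parameters a b: warp x is dark iff x odd xor a,
   weft y is dark iff y odd xor b (true = dark). *)
Definition oddz (x : int) : bool := odd `|x|%N.

Definition thin_colour (a b : bool) (s : strand) : bool :=
  if s.1 then oddz s.2 (+) b else oddz s.2 (+) a.

Definition perfect (F : design) (a b : bool) : Prop :=
  forall g tau, is_symmetry F g tau ->
    (forall s t, maps_strand g s t -> thin_colour a b t = thin_colour a b s) \/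
    (forall s t, maps_strand g s t -> thin_colour a b t = ~~ thin_colour a b s).

Definition pattern (F : design) (a b : bool) : design :=
  fun p => if F p then thin_colour a b (false, p.1) else thin_colour a b (true, p.2).

From mathcomp Require Import all_boot all_order all_algebra.

Set Implicit Arguments.
Unset Strict Implicit.
Unset Printing Implicit Defensive.

(* A side-preserving symmetry of F carries the strand uppermost at a cell to
   the strand uppermost at its image, so a perfect colouring shifts the colours
   of the pattern by a constant; together with the transitivity of H_1 this
   makes the pattern isonemal.  The pattern falls apart whatever F is: at every
   crossing of a dark warp with a dark weft, or of a pale warp with a pale
   weft, the pattern has the colour of both strands, so the dark warps together
   with the pale wefts can be lifted off. *)

Definition uppermost (F : design) (p : cell) : strand :=
  if F p then (false, p.1) else (true, p.2).

Lemma patternE F a b p : pattern F a b p = thin_colour a b (uppermost F p).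
Proof. by rewrite /pattern /uppermost; case: (F p). Qed.

Lemma symmetry_maps_uppermost F g p : is_symmetry F g false ->
  maps_strand g (uppermost F p) (uppermost F (cellmap g p)).
Proof.
move=> symFg q; rewrite /uppermost symFg.
case: g {symFg} => [[] nx ny [c1 c2]];
  by case: (F p); rewrite /on_strand /cellmap /= => /eqP ->.
Qed.

Lemma perfect_colour_shift F a b g tau : perfect F a b -> is_symmetry F g tau ->
  exists c, forall s t, maps_strand g s t ->
    thin_colour a b t = thin_colour a b s (+) c.
Proof.
move=> perfF /perfF [keep | swap]; [exists false | exists true] => s t gst.
  by rewrite (keep s t gst) addbF.
by rewrite (swap s t gst) addbT.
Qed.

Lemma pattern_symmetry F a b g c : is_symmetry F g false ->
  (forall s t, maps_strand g s t -> thin_colour a b t = thin_colour a b s (+) c) ->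
  is_symmetry (pattern F a b) g (iswap g (+) c).
Proof.
move=> symFg shift p.
have gp := symmetry_maps_uppermost (p := p) symFg.
by rewrite !patternE (shift _ _ gp) -addbA addKb.
Qed.

Lemma pattern_isonemal F a b :
  H1_transitive F -> perfect F a b -> isonemal (pattern F a b).
Proof.
move=> transF perfF s t; have [g [symFg gst]] := transF s t.
have [c shift] := perfect_colour_shift perfF symFg.
by exists g, (iswap g (+) c); split; first exact: pattern_symmetry.
Qed.

Lemma pattern_falls_apart F a b : falls_apart (pattern F a b).
Proof.
exists (fun s : strand => thin_colour a b s (+) s.1).
split; first by exists (false, Posz (~~ a)); case: a.
split; first by exists (false, Posz a); case: a.
move=> i j; rewrite /pattern /=.
by case: (F (i, j)); case: (thin_colour a b (false, i));
  case: (thin_colour a b (true, j)).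
Qed.

Theorem theorem3p1 (F : design) (a b : bool) :
  fabric F -> periodic F -> order_gt F 4 ->
  H1_generated_by_glides F -> H1_transitive F ->
  perfect F a b ->
  isonemal (pattern F a b) /\ falls_apart (pattern F a b).
Proof.
move=> _ _ _ _ transF perfF.
by split; [exact: pattern_isonemal | exact: pattern_falls_apart].
Qed.
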